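(* Under the setting and assumptions in the context, let $N_{AL}=\Pr(R=1,Y=0\mid Z=1)-\Pr(R=1,Y=0\mid Z=0)$ and suppose $N_{AL}\ge 0$ and $\max_{z}\Pr(R=1,Y=0\mid Z=z)>0$. Then $$\frac{N_{AL}}{1-\max_z\Pr(Y=1\mid Z=z)}\ \le\ APCE_{AL}\ \le\ \frac{N_{AL}}{\max_z\Pr(R=1,Y=0\mid Z=z)},$$ where maxima are over $z\in\{0,1\}$.
   Context: Units are drawn from a population (a probability space). Each unit has a binary assignment $Z\in\{0,1\}$ with $0<\Pr(Z=1)<1$, binary potential recommendations $R(0),R(1)\in\{0,1\}$, and binary potential outcomes $Y(0),Y(1)\in\{0,1\}$ indexed by the recommendation only (exclusion restriction). Observed quantities are $R=R(Z)$ and $Y=Y(R(Z))$. Assumptions: (Randomization) $Z$ is independent of $(R(0),R(1),Y(0),Y(1))$; (Monotonicity) $Y(1)\ge Y(0)$ almost surely. Always Low stratum $AL=\{Y(0)=Y(1)=0\}$; $APCE_{AL}=E[R(1)-R(0)\mid AL]$. *)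

From HB Require Import structures.
From mathcomp Require Import all_boot all_order all_algebra.
From mathcomp Require Import all_classical all_reals all_analysis.
Set Implicit Arguments. Unset Strict Implicit. Unset Printing Implicit Defensive.
Import Order.TTheory GRing.Theory Num.Theory.
Local Open Scope classical_set_scope.
Local Open Scope ring_scope.

Section Defs.
Context {d : measure_display} {T : measurableType d} {R : realType}.
Variable P : probability T R.

Definition Pr (A : set T) : R := fine (P A).

Definition cPr (A B : set T) : R := Pr (A `&` B) / Pr B.

Definition ev (X : T -> bool) (b : bool) : set T := [set w | X w = b].

Definition b2R (b : bool) : R := (b : nat)%:R.

Definition cE (X : T -> R) (A : set T) : R :=
  fine (\int[P]_(w in A) (X w)%:E) / Pr A.
End Defs.

(* the potential-outcome vector (R(0), R(1), Y(0), Y(1)) *)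
Definition pvec {T : Type} (R0 R1 Y0 Y1 : T -> bool) (w : T) :
  bool * bool * bool * bool := (R0 w, R1 w, Y0 w, Y1 w).

Definition indep_Z {d : measure_display} {T : measurableType d} {R : realType}
  (P : probability T R) (Z : T -> bool) {U : Type} (V : T -> U) : Prop :=
  forall (b : bool) (A : set U),
    P ([set w | Z w = b] `&` (V @^-1` A)) =
    (P [set w | Z w = b] * P (V @^-1` A))%E.

From HB Require Import structures.
From mathcomp Require Import all_boot all_order all_algebra.
From mathcomp Require Import all_classical all_reals all_analysis.
Import Order.TTheory GRing.Theory Num.Theory.
Local Open Scope classical_set_scope.
Local Open Scope ring_scope.

(* Randomization makes the law of (R(0), R(1), Y(0), Y(1)) given Z = z equal
   to its unconditional law.  Given Z = z the event {R = 1, Y = 0} is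
   {R(z) = 1, Y(1) = 0}, which by monotonicity coincides up to a null set
   with {R(z) = 1} /\ AL; hence N_AL = Pr(AL) APCE_AL and each
   Pr(R = 1, Y = 0 | Z = z) <= Pr(AL).  Likewise {Y = 1} given Z = z lies
   outside AL, so Pr(AL) <= 1 - Pr(Y = 1 | Z = z).  Dividing N_AL >= 0 by
   these three quantities gives the bounds. *)

Lemma ratio_bounds (R : realFieldType) (n m M a : R) :
  0 <= n -> 0 < m -> m <= a -> M <= 1 - a ->
  n / (1 - M) <= n / a <= n / m.
Proof.
move=> n_ge0 m_gt0 m_le_a M_le; have a_gt0 := lt_le_trans m_gt0 m_le_a.
have a_le : a <= 1 - M by rewrite lerBrDr addrC -lerBrDr.
apply/andP; split; apply: ler_wpM2l => //; rewrite lef_pV2 ?posrE //.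
exact: lt_le_trans a_le.
Qed.

Section Probability.
Context {d : measure_display} {T : measurableType d} {R : realType}.
Variable P : probability T R.

Lemma measurable_ev (X : T -> bool) b :
  measurable [set w | X w] -> measurable (ev X b).
Proof.
move=> mX; case: b => //.
rewrite (_ : ev X false = ~` [set w | X w]); first exact: measurableC.
by apply/seteqP; split=> w /=; rewrite /ev /=; case: (X w).
Qed.

Lemma Pr_le (A B : set T) : measurable A -> measurable B -> A `<=` B ->
  Pr P A <= Pr P B.
Proof.
move=> mA mB AB; apply: fine_le; rewrite ?fin_num_measure //.
by apply: le_measure => //; rewrite inE.
Qed.

Lemma Pr_setC (A : set T) : measurable A -> Pr P (~` A) = 1 - Pr P A.
Proof.
by move=> mA; rewrite /Pr probability_setC // fineB ?fin_num_measure.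
Qed.

Lemma measure_eq_upto_null {A B N : set T} :
  measurable A -> measurable B -> measurable N -> P N = 0%E ->
  A `<=` B -> B `<=` A `|` N -> P A = P B.
Proof.
move=> mA mB mN N0 AB BAN; apply/le_anti/andP; split.
  by apply: le_measure => //; rewrite inE.
rewrite -(measureU0 (mu := P) mA mN N0); apply: le_measure; rewrite ?inE //.
exact: measurableU.
Qed.

Lemma Pr_ev_neq0 {Z : T -> bool} : measurable [set w | Z w] ->
  0 < Pr P (ev Z true) < 1 -> forall z, Pr P (ev Z z) != 0.
Proof.
move=> mZ /andP[Z1_gt0 Z1_lt1] [|]; first by rewrite gt_eqF.
rewrite (_ : ev Z false = ~` [set w | Z w]); last first.
  by apply/seteqP; split=> w /=; rewrite /ev /=; case: (Z w).
by rewrite Pr_setC // subr_eq0 eq_sym lt_eqF.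
Qed.

Lemma cPr_indep_Z {U : Type} {Z : T -> bool} {V : T -> U} {E : set T}
    {A : set U} {z : bool} :
  measurable [set w | Z w] -> measurable (V @^-1` A) ->
  indep_Z P Z V -> Pr P (ev Z z) != 0 ->
  (forall w, Z w = z -> E w <-> A (V w)) ->
  cPr P E (ev Z z) = Pr P (V @^-1` A).
Proof.
move=> mZ mVA ZV Zz_neq0 EA; rewrite /cPr.
have -> : E `&` ev Z z = ev Z z `&` V @^-1` A.
  apply/seteqP; split=> w /=.
    by case=> Ew Zw; split=> //; apply/(EA w Zw).
  by case=> Zw VAw; split=> //; apply/(EA w Zw).
have mZz : measurable (ev Z z) := measurable_ev Z z mZ.
rewrite /Pr ZV fineM ?fin_num_measure // -/(Pr P _) -/(Pr P _).
by rewrite mulrAC divff // mul1r.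
Qed.

Lemma cE_b2R_diff (A : set T) (X1 X0 : T -> bool) : measurable A ->
  measurable [set w | X1 w] -> measurable [set w | X0 w] ->
  cE P (fun w => b2R (X1 w) - b2R (X0 w)) A =
  (Pr P (A `&` [set w | X1 w]) - Pr P (A `&` [set w | X0 w])) / Pr P A.
Proof.
move=> mA mX1 mX0; rewrite /cE; congr (_ / _).
have b2R_indic (X : T -> bool) w : b2R (X w) = \1_[set w | X w] w :> R.
  rewrite indicE; case: (boolP (X w)) => Xw; first by rewrite mem_set.
  by rewrite memNset //; exact/negP.
under eq_integral do rewrite !b2R_indic EFinB.
rewrite integralB ?integral_indic //; last 2 first.
- by apply: (integrableS measurableT) => //; exact: integrable_indic.
- by apply: (integrableS measurableT) => //; exact: integrable_indic.
by rewrite fineB ?fin_num_measure ?(setIC A) //; exact: measurableI.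
Qed.

End Probability.

Section AlwaysLow.
Context {d : measure_display} {T : measurableType d} {R : realType}.
Variable P : probability T R.
Variables Z R0 R1 Y0 Y1 : T -> bool.
Hypotheses (mZ : measurable [set w | Z w]) (mR0 : measurable [set w | R0 w])
  (mR1 : measurable [set w | R1 w]) (mY0 : measurable [set w | Y0 w])
  (mY1 : measurable [set w | Y1 w]).
Hypothesis Zrand : indep_Z P Z (pvec R0 R1 Y0 Y1).
Hypothesis Z_neq0 : forall z, Pr P (ev Z z) != 0.
Hypothesis Ymono : P [set w | Y0 w && ~~ Y1 w] = 0%E.

Definition Robs (w : T) : bool := if Z w then R1 w else R0 w.
Definition Yobs (w : T) : bool := if Robs w then Y1 w else Y0 w.
Definition AL : set T := [set w | Y0 w = false /\ Y1 w = false].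
Definition Rpot (z : bool) : T -> bool := if z then R1 else R0.

Lemma measurable_AL : measurable AL.
Proof.
exact: measurableI (measurable_ev _ false mY0) (measurable_ev _ false mY1).
Qed.

Lemma measurable_pvec_preimage (A : set (bool * bool * bool * bool)) :
  measurable (pvec R0 R1 Y0 Y1 @^-1` A).
Proof.
rewrite (_ : _ @^-1` A = \bigcup_(v in A) pvec R0 R1 Y0 Y1 @^-1` [set v]).
  apply: fin_bigcup_measurable; first exact: finite_finset.
  move=> [[[r0 r1] y0] y1] _.
  rewrite (_ : _ @^-1` _ = ev R0 r0 `&` ev R1 r1 `&` ev Y0 y0 `&` ev Y1 y1).
    by repeat apply: measurableI; apply: measurable_ev.
  apply/seteqP; split=> w /=; rewrite /pvec /ev /=.
    by case=> -> -> -> ->.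
  by case=> [[[-> ->] ->] ->].
apply/seteqP; split=> w /=; first by exists (pvec R0 R1 Y0 Y1 w).
by case=> v Av /= ->.
Qed.

Lemma measurable_AL_Rpot z : measurable (AL `&` [set w | Rpot z w]).
Proof. by apply: measurableI; [exact: measurable_AL | case: z]. Qed.

Lemma Pr_AL_Rpot_le z : Pr P (AL `&` [set w | Rpot z w]) <= Pr P AL.
Proof.
by apply: Pr_le; [exact: measurable_AL_Rpot | exact: measurable_AL | ].
Qed.

Lemma cPr_R1Y0_Z z :
  cPr P (ev Robs true `&` ev Yobs false) (ev Z z) =
  Pr P (AL `&` [set w | Rpot z w]).
Proof.
pose B := [set v : bool * bool * bool * bool |
  (if z then v.1.1.2 else v.1.1.1) && ~~ v.2].
rewrite (cPr_indep_Z P mZ (measurable_pvec_preimage B) Zrand (Z_neq0 z));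
  last first.
  move=> w Zw; rewrite /Yobs /Robs /ev /B /pvec /= -Zw.
  by case: (Z w) (R0 w) (R1 w) (Y0 w) (Y1 w) => [] [] [] [] [] /=; intuition.
congr fine; symmetry.
(* off the null set {Y(0) = 1, Y(1) = 0}, Y(1) = 0 forces Y(0) = 0 *)
apply: (measure_eq_upto_null P (N := [set w | Y0 w && ~~ Y1 w])) => //;
  last 2 first.
1,2: move=> w; rewrite /AL /B /Rpot /pvec /= {B}.
1,2: by case: z => /=; case: (R0 w) (R1 w) (Y0 w) (Y1 w) => [] [] [] [] /=;
  intuition.
- exact: measurable_AL_Rpot.
- exact: measurable_pvec_preimage.
- exact: (measurable_pvec_preimage [set v | v.1.2 && ~~ v.2]).
Qed.

Lemma cPr_Y1_Z_le z : cPr P (ev Yobs true) (ev Z z) <= 1 - Pr P AL.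
Proof.
pose B := [set v : bool * bool * bool * bool |
  if (if z then v.1.1.2 else v.1.1.1) then v.2 else v.1.2].
rewrite (cPr_indep_Z P mZ (measurable_pvec_preimage B) Zrand (Z_neq0 z));
  last first.
  move=> w Zw; rewrite /Yobs /Robs /ev /B /pvec /= -Zw.
  by case: (Z w) (R0 w) (R1 w) (Y0 w) (Y1 w) => [] [] [] [] [] /=; intuition.
rewrite -Pr_setC; last exact: measurable_AL.
apply: Pr_le; first exact: measurable_pvec_preimage.
  exact/measurableC/measurable_AL.
move=> w; rewrite /AL /B /pvec /= {B}.
by case: z; case: (R0 w) (R1 w) (Y0 w) (Y1 w) => [] [] [] [] /=; intuition.
Qed.

End AlwaysLow.

Theorem mainTheorem8 (d : measure_display) (T : measurableType d)
  (R : realType) (P : probability T R)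
  (Z R0 R1 Y0 Y1 : T -> bool)
  (mZ : measurable [set w | Z w]) (mR0 : measurable [set w | R0 w])
  (mR1 : measurable [set w | R1 w]) (mY0 : measurable [set w | Y0 w])
  (mY1 : measurable [set w | Y1 w])
  (hZ : 0 < Pr P (ev Z true) < 1)
  (hrand : indep_Z P Z (pvec R0 R1 Y0 Y1))
  (hmono : P [set w | Y0 w && ~~ Y1 w] = 0%E) :
  let Robs := fun w => if Z w then R1 w else R0 w in
  let Yobs := fun w => if Robs w then Y1 w else Y0 w in
  let AL := [set w | Y0 w = false /\ Y1 w = false] in
  let APCE_AL := cE P (fun w => b2R (R1 w) - b2R (R0 w)) AL in
  let pRY z := cPr P (ev Robs true `&` ev Yobs false) (ev Z z) in
  let pY z := cPr P (ev Yobs true) (ev Z z) in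
  let N_AL := pRY true - pRY false in
  0 <= N_AL ->
  0 < Num.max (pRY false) (pRY true) ->
  N_AL / (1 - Num.max (pY false) (pY true)) <= APCE_AL <=
  N_AL / Num.max (pRY false) (pRY true).
Proof.
move=> Robs' Yobs' AL' APCE pRY pY N_AL N_AL_ge0 pRY_gt0.
have Z_neq0 := Pr_ev_neq0 P mZ hZ.
have pRY_AL z : pRY z = Pr P (AL Y0 Y1 `&` [set w | Rpot R0 R1 z w]).
  by apply: cPr_R1Y0_Z.
have -> : APCE = N_AL / Pr P (AL Y0 Y1).
  rewrite /APCE cE_b2R_diff //; last exact: (measurable_AL _ _ mY0 mY1).
  by rewrite /N_AL !pRY_AL.
apply: ratio_bounds => //.
  by rewrite ge_max !pRY_AL !Pr_AL_Rpot_le.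
by rewrite ge_max; apply/andP; split; apply: cPr_Y1_Z_le.
Qed.
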